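(* Let $\nu\in\mathcal P_2(\mathbb R^d)$ and $\mathcal D\subset\mathcal P_2(\mathbb R^d)$. Consider the relaxed problem $$(\mathrm{R})\qquad \min_{\mu\in\mathcal D}\mathcal W_2^2(\mu,\nu)$$ and the self-consistent problem $$(\mathrm{S})\qquad \inf_{\mu\in\mathcal D}\ \inf_{\pi\in\mathcal M(\mu,\nu)}\int|x-y|^2\,d\pi(x,y).$$ Assume there exist a minimizer $\mu\in\mathcal D$ of $(\mathrm R)$ and an optimal coupling $\pi\in\Pi(\mu,\nu)$ for $\mathcal W_2^2(\mu,\nu)$ such that $(c_\pi)_\#\mu\in\mathcal D$. Then $(c_\pi)_\#\mu$ is optimal both for $(\mathrm R)$ and for $(\mathrm S)$ (in $(\mathrm S)$ together with the coupling $(\mathsf C_\pi)_\#\pi\in\mathcal M((c_\pi)_\#\mu,\nu)$), and the optimal values of $(\mathrm R)$ and $(\mathrm S)$ coincide.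
   Context: $\mathcal P_2(\mathbb R^d)$ is the set of Borel probability measures on $\mathbb R^d$ with finite second moment. $\Pi(\mu,\nu)$ is the set of couplings of $\mu,\nu$ and $\mathcal W_2^2(\mu,\nu)=\inf_{\pi\in\Pi(\mu,\nu)}\int|x-y|^2d\pi$. $\mathcal M(\mu,\nu)$ is the set of martingale couplings: laws $\pi=\mathcal L(X,Y)$ with $X\sim\mu$, $Y\sim\nu$ and $\mathbb E_\pi[Y\mid X]=X$. For $\pi\in\Pi(\mu,\nu)$ with disintegration $\pi=\mu\otimes\pi_x$ (i.e. $\pi(A\times B)=\int_A\pi_x(B)\,d\mu(x)$), the $\pi$-conditional barycentric map is $c_\pi(x)=\int y\,d\pi_x(y)$ ($\mu$-a.e.), and $\mathsf C_\pi(x,y)=(c_\pi(x),y)$. *)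

(* R^d is modelled as [d.-tuple R] with its canonical
   product sigma-algebra (= Borel sigma-algebra of R^d). *)
From HB Require Import structures.
From mathcomp Require Import all_boot all_order all_algebra.
From mathcomp Require Import all_classical all_reals all_analysis.
Set Implicit Arguments.
Unset Strict Implicit.
Unset Printing Implicit Defensive.
Import Order.TTheory GRing.Theory Num.Theory.
Local Open Scope classical_set_scope.
Local Open Scope ring_scope.

Section OT.
Variables (R : realType) (d : nat).
Local Notation Rd := (d.-tuple R).

Definition sqdist (x y : Rd) : R := \sum_(i < d) (tnth x i - tnth y i) ^+ 2.
Definition sqnorm (x : Rd) : R := \sum_(i < d) (tnth x i) ^+ 2.

Definition P2 (mu : probability Rd R) : Prop :=
  (\int[mu]_x (sqnorm x)%:E < +oo)%E.

Definition is_coupling (mu nu : probability Rd R)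
  (pi : probability (Rd * Rd)%type R) : Prop :=
  forall A : set Rd, measurable A ->
    pushforward pi fst A = mu A /\ pushforward pi snd A = nu A.

Definition cost (pi : probability (Rd * Rd)%type R) : \bar R :=
  (\int[pi]_z (sqdist z.1 z.2)%:E)%E.

Definition W2sq (mu nu : probability Rd R) : \bar R :=
  ereal_inf [set cost pi | pi in [set pi | is_coupling mu nu pi]].

(* M(mu, nu): couplings with E_pi[Y | X] = X, i.e. (componentwise)
   Y integrable and int_{A x R^d} y_i dpi = int_{A x R^d} x_i dpi
   for every Borel A. *)
Definition is_martingale_coupling (mu nu : probability Rd R)
  (pi : probability (Rd * Rd)%type R) : Prop :=
  is_coupling mu nu pi /\
  forall i : 'I_d,
    pi.-integrable setT (fun z : Rd * Rd => (tnth z.2 i)%:E) /\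
    forall A : set Rd, measurable A ->
      (\int[pi]_(z in A `*` setT) (tnth z.2 i)%:E =
       \int[pi]_(z in A `*` setT) (tnth z.1 i)%:E)%E.

(* pi = mu (x) pi_x : disintegration of pi w.r.t. its first marginal
   by a probability kernel k (x |-> pi_x) *)
Definition disintegrates (mu : probability Rd R)
  (pi : probability (Rd * Rd)%type R) (k : R.-pker Rd ~> Rd) : Prop :=
  forall A B : set Rd, measurable A -> measurable B ->
    pi (A `*` B) = (\int[mu]_(x in A) k x B)%E.

Definition bary (k : R.-pker Rd ~> Rd) (x : Rd) : Rd :=
  [tuple Rintegral (k x) setT (fun y : Rd => tnth y i) | i < d].

Definition value_R (D : set (probability Rd R)) (nu : probability Rd R) : \bar R :=
  ereal_inf [set W2sq m nu | m in D].

Definition value_S (D : set (probability Rd R)) (nu : probability Rd R) : \bar R :=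
  ereal_inf [set cost p | p in
    [set p | exists m, D m /\ is_martingale_coupling m nu p]].

End OT.

(* Let pi_x be the conditional law of y given x under the optimal coupling pi,
   and c(x) its mean. For every a, the mean c(x) minimizes a |-> int |a - y|^2
   dpi_x(y); taking a = x and integrating in mu shows that the barycentric
   projection pi' = (c(x), y)_# pi, a coupling of mu' = c_# mu and nu, costs at
   most W2^2(mu, nu). It is a martingale coupling: integrating y over
   {c(x) in A} gives, conditionally on x, the mean c(x) again. Hence
   W2^2(mu', nu) <= cost pi' <= W2^2(mu, nu) = min (R) <= inf (S) <= cost pi',
   since every martingale coupling is a coupling and pi' is admissible in (S);
   so all these quantities coincide. *)

From HB Require Import structures.
From mathcomp Require Import all_boot all_order all_algebra.
From mathcomp Require Import all_classical all_reals all_analysis.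
From mathcomp Require Import measurable_realfun ring lra.
Set Implicit Arguments.
Unset Strict Implicit.
Unset Printing Implicit Defensive.
Import Order.TTheory GRing.Theory Num.Theory.
Local Open Scope classical_set_scope.
Local Open Scope ring_scope.

Lemma ler_norm_1Dsqr (R : realDomainType) (t : R) : `|t| <= 1 + t ^+ 2.
Proof.
rewrite -[t ^+ 2]real_normK ?num_real//.
by have := normr_ge0 t; set u := `|t|; nra.
Qed.

Section image_measure.
Context d1 d2 (X : measurableType d1) (Y : measurableType d2) (R : realType).
Local Open Scope ereal_scope.

Lemma integral_pushforwardE (phi : X -> Y) (m : measure X R) (D : set Y)
    (f : Y -> \bar R) :
  measurable_fun setT phi -> measurable D -> measurable_fun setT f ->
  \int[pushforward m phi]_(y in D) f y = \int[m]_(x in phi @^-1` D) f (phi x).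
Proof.
move=> mphi mD mf; rewrite [LHS]integralE [RHS]integralE.
have mfp := measurable_funTS (D := D) (measurable_funepos mf).
have mfn := measurable_funTS (D := D) (measurable_funeneg mf).
rewrite (ge0_integral_pushforward mphi m mD mfp);
  last by move=> y _; exact: funepos_ge0.
rewrite (ge0_integral_pushforward mphi m mD mfn);
  last by move=> y _; exact: funeneg_ge0.
by congr (_ - _); apply: eq_integral => x _;
  rewrite /= ?funeposE ?funenegE.
Qed.

Lemma integral_marginal (phi : X -> Y) (m : measure X R) (n : measure Y R)
    (D : set Y) (f : Y -> \bar R) :
  measurable_fun setT phi -> measurable D -> measurable_fun setT f ->
  (forall A, measurable A -> pushforward m phi A = n A) ->
  \int[m]_(x in phi @^-1` D) f (phi x) = \int[n]_(y in D) f y.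
Proof.
move=> mphi mD mf mn; rewrite -integral_pushforwardE//.
by apply: eq_measure_integral => A mA _; exact: mn.
Qed.

Lemma integrable_marginal (phi : X -> Y) (m : measure X R) (n : measure Y R)
    (f : Y -> \bar R) :
  measurable_fun setT phi ->
  (forall A, measurable A -> pushforward m phi A = n A) ->
  n.-integrable setT f -> m.-integrable setT (f \o phi).
Proof.
move=> mphi mn /integrableP[mf fin]; apply/integrableP; split.
  exact: measurableT_comp.
have mabs : measurable_fun setT (fun y => `|f y|).
  exact: (measurableT_comp (@abse_measurable R setT)).
have := integral_marginal mphi measurableT mabs mn.
by rewrite preimage_setT => ->.
Qed.

End image_measure.

Section disintegration.
Context d1 d2 (X : measurableType d1) (Y : measurableType d2) (R : realType).
Local Open Scope ereal_scope.
Variable k : R.-pker X ~> Y.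

Definition graph_measure (p : unit * X) : set (X * Y) -> \bar R :=
  pushforward (k p.2) (pair p.2).

Let graph_measure0 p : graph_measure p set0 = 0.
Proof. by rewrite /graph_measure /pushforward preimage_set0 measure0. Qed.

Let graph_measure_ge0 p A : 0 <= graph_measure p A.
Proof. exact: measure_ge0. Qed.

Let graph_measure_sigma_additive p : semi_sigma_additive (graph_measure p).
Proof.
move=> F mF tF mUF; rewrite /graph_measure /pushforward preimage_bigcup.
have mpair := @pair1_measurable _ _ X Y p.2.
apply: measure_semi_sigma_additive.
- by move=> n; rewrite -[X in measurable X]setTI; exact: mpair.
- apply/trivIsetP => /= i j _ _ ij; rewrite -preimage_setI.
  by move/trivIsetP : tF => /(_ _ _ _ _ ij) ->//; rewrite preimage_set0.
- by rewrite -preimage_bigcup -[X in measurable X]setTI; exact: mpair.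
Qed.

HB.instance Definition _ p := isMeasure.Build _ _ _
  (graph_measure p) (graph_measure0 p) (graph_measure_ge0 p)
  (@graph_measure_sigma_additive p).

Definition graph_kernel : unit * X -> {measure set (X * Y) -> \bar R} :=
  graph_measure.

Let measurable_graph_kernel U : measurable U ->
  measurable_fun [set: unit * X] (graph_kernel ^~ U).
Proof.
move=> mU; have := measurable_fun_xsection_finite_kernel k (A := U).
rewrite inE => /(_ mU) mk.
rewrite (_ : graph_kernel ^~ U = (fun x => k x (xsection U x)) \o snd).
  exact: measurableT_comp mk measurable_snd.
apply/funext => -[a b].
by rewrite /graph_kernel /graph_measure /pushforward /= xsectionE.
Qed.

HB.instance Definition _ :=
  isKernel.Build _ _ _ _ _ graph_kernel measurable_graph_kernel.

Let graph_kernel_prob p : graph_kernel p setT = 1.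
Proof.
change (k p.2 (pair p.2 @^-1` setT) = 1).
by rewrite preimage_setT prob_kernel.
Qed.

HB.instance Definition _ :=
  Kernel_isProbability.Build _ _ _ _ _ graph_kernel graph_kernel_prob.

Variables (mu : probability X R) (pi : probability (X * Y)%type R).
Hypothesis pi_disint : forall A B, measurable A -> measurable B ->
  pi (A `*` B) = \int[mu]_(x in A) k x B.

(* [kcomp] composes kernels with a parameter, so mu and x |-> delta_x (x) k x
   enter as kernels on the one-point space [unit]; pi = mu (x) k is then their
   composition. *)
Let measurable_cst_mu :
  measurable_fun [set: unit] (fun=> (mu : pprobability X R)).
Proof. exact: measurable_cst. Qed.

Let mu_kernel := kprobability measurable_cst_mu.

Let disintegration_mkcomp E : measurable E ->
  pi E = mkcomp mu_kernel graph_kernel tt E.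
Proof.
apply: (measure_unique [set A `*` B | A in measurable & B in measurable]
  (fun=> setT)).
- exact: measurable_prod_measurableType.
- move=> _ _ [A1 mA1 [B1 mB1 <-]] [A2 mA2 [B2 mB2 <-]].
  exists (A1 `&` A2); first exact: measurableI.
  by exists (B1 `&` B2); [exact: measurableI|rewrite setXI].
- by move=> _; exists setT => //; exists setT => //; rewrite setXTT.
- by rewrite bigcup_const.
- move=> _ [A mA [B mB <-]].
  transitivity (\int[mu]_(x in A) k x B); first exact: pi_disint.
  rewrite integral_mkcond.
  change (\int[mu]_x ((fun x => k x B) \_ A) x =
    \int[mu]_x k x (pair x @^-1` (A `*` B))).
  apply: eq_integral => x _; rewrite patchE.
  case: ifPn => [/set_mem Ax|xA].
    by congr (k x _); apply/seteqP; split => [y By|y []].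
  rewrite (_ : _ @^-1` _ = set0) ?measure0//.
  by apply/seteqP; split => [y [/= Ax _]|//]; apply/(negP xA)/mem_set.
- by move=> _; rewrite [X in X < _](probability_setT pi) ltry.
Qed.

Lemma ge0_integral_disintegration (f : X * Y -> \bar R) :
  (forall z, 0 <= f z) -> measurable_fun setT f ->
  \int[pi]_z f z = \int[mu]_x \int[k x]_y f (x, y).
Proof.
move=> f0 mf; rewrite (eq_measure_integral (mkcomp mu_kernel graph_kernel tt));
  last by move=> A mA _; exact: disintegration_mkcomp.
rewrite integral_kcomp//; apply: eq_integral => x _.
by rewrite (ge0_integral_pushforward (pair1_measurable x)) ?preimage_setT.
Qed.

Lemma ge0_integral_disintegration_setX (B : set X) (f : X * Y -> \bar R) :
  measurable B -> (forall z, 0 <= f z) -> measurable_fun setT f ->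
  \int[pi]_(z in B `*` setT) f z = \int[mu]_(x in B) \int[k x]_y f (x, y).
Proof.
move=> mB f0 mf; have mBT : measurable (B `*` [set: Y]) by exact: measurableX.
rewrite integral_mkcond ge0_integral_disintegration; first last.
- by apply/(measurable_restrictT _ mBT)/measurable_funTS.
- by move=> z; rewrite patchE; case: ifP.
rewrite [RHS]integral_mkcond; apply: eq_integral => x _; rewrite patchE.
case: ifPn => [/set_mem Bx|xB].
  by apply: eq_integral => y _; rewrite patchE mem_set.
apply: integral0_eq => y _; rewrite patchE ifN//.
by apply: contra xB => /set_mem[/= Bx _]; exact/mem_set.
Qed.

Let integrable_kfcomp (f g : X * Y -> \bar R) :
  pi.-integrable setT f -> measurable_fun setT g ->
  (forall z, 0 <= g z) -> (forall z, g z <= `|f z|) ->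
  mu.-integrable setT (kfcomp k g).
Proof.
move=> /integrableP[mf finf] mg g0 gf.
have mkg := measurable_kfcomp k mg g0.
apply/integrableP; split => //.
under eq_integral do rewrite gee0_abs ?integral_ge0//.
rewrite -ge0_integral_disintegration//; apply: le_lt_trans finf.
by apply: ge0_le_integral => //; exact: measurableT_comp.
Qed.

Lemma integral_disintegration_setX (B : set X) (f : X * Y -> \bar R) :
  measurable B -> pi.-integrable setT f ->
  \int[pi]_(z in B `*` setT) f z = \int[mu]_(x in B) \int[k x]_y f (x, y).
Proof.
move=> mB intf; have /integrableP[mf _] := intf.
have mfp := measurable_funepos mf; have mfn := measurable_funeneg mf.
have abs_parts z : `|f z| = f^\+ z + f^\- z.
  by rewrite -[LHS]/((abse \o f) z) fune_abse.
have intp : mu.-integrable setT (kfcomp k f^\+).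
  apply: integrable_kfcomp intf mfp (funepos_ge0 f) _ => z.
  by rewrite abs_parts leeDl// funeneg_ge0.
have intn : mu.-integrable setT (kfcomp k f^\-).
  apply: integrable_kfcomp intf mfn (funeneg_ge0 f) _ => z.
  by rewrite abs_parts leeDr// funepos_ge0.
have intpB := integrableS measurableT mB (@subsetT _ _) intp.
have intnB := integrableS measurableT mB (@subsetT _ _) intn.
rewrite integralE !ge0_integral_disintegration_setX//.
rewrite -(integralB mB intpB intnB); apply: eq_integral => x _.
rewrite [RHS]integralE /kfcomp.
by congr (_ - _); apply: eq_integral => y _; rewrite ?funeposE ?funenegE.
Qed.

Lemma ae_integrable_disintegration (f : X * Y -> \bar R) :
  pi.-integrable setT f ->
  {ae mu, forall x, (k x).-integrable setT (fun y => f (x, y))}.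
Proof.
move=> intf; have /integrableP[mf _] := intf.
have mabs : measurable_fun setT (abse \o f).
  exact: measurableT_comp (@abse_measurable R setT) mf.
have := integrable_ae measurableT
  (integrable_kfcomp intf mabs (fun z => abse_ge0 (f z)) (fun z => lexx _)).
apply: filterS => x /(_ I) finx; apply/integrableP; split.
  exact: measurableT_comp mf (pair1_measurable x).
by rewrite ltey_eq finx.
Qed.

End disintegration.

Section mean_square_deviation.
Context d (T : measurableType d) (R : realType) (P : measure T R).
Hypothesis P1 : P setT = 1%E.

Let integral_cst1 (c : R) : (\int[P]_y c%:E = c%:E)%E.
Proof. by rewrite integral_cst// P1 mule1. Qed.

Let integrable_cst (c : R) : P.-integrable setT (fun=> c%:E).
Proof.
apply/integrableP; split; first exact: measurable_cst.
by rewrite integral_cst1 ltry.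
Qed.

Let integrable_sqr_dev (g : T -> R) (a : R) : measurable_fun setT g ->
  (\int[P]_y ((a - g y) ^+ 2)%:E < +oo)%E ->
  P.-integrable setT (EFin \o fun y => (a - g y) ^+ 2).
Proof.
move=> mg fin; apply/integrableP; split.
  by apply/measurable_EFinP; apply: measurable_funX; exact: measurable_funB.
by under eq_integral do rewrite gee0_abs ?lee_fin ?sqr_ge0//.
Qed.

Lemma integrable_of_sqr_dev (g : T -> R) (a : R) : measurable_fun setT g ->
  (\int[P]_y ((a - g y) ^+ 2)%:E < +oo)%E -> P.-integrable setT (EFin \o g).
Proof.
move=> mg fin; have intdev := integrable_sqr_dev mg fin.
apply: le_integrable (integrableD _ (integrable_cst (`|a| + 1)) intdev) => //.
  exact/measurable_EFinP.
move=> y _ /=; rewrite lee_fin.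
have le_abs : `|g y| <= `|a| + `|a - g y|.
  by rewrite -[X in `|X|](subKr a (g y)) (le_trans (ler_normB _ _)).
have le_sqr := ler_norm_1Dsqr (a - g y).
have pos : 0 <= `|a| + 1 + (a - g y) ^+ 2 by rewrite !addr_ge0 ?sqr_ge0.
rewrite [X in _ <= X]ger0_norm//; lra.
Qed.

Lemma integral_sqr_dev_mean_le (g : T -> R) (a : R) : measurable_fun setT g ->
  (\int[P]_y ((fine (\int[P]_z (g z)%:E) - g y) ^+ 2)%:E <=
   \int[P]_y ((a - g y) ^+ 2)%:E)%E.
Proof.
move=> mg; set m := fine _.
have [->|fin] := eqVneq (\int[P]_y ((a - g y) ^+ 2)%:E)%E +oo%E.
  exact: leey.
rewrite -ltey in fin; have intg := integrable_of_sqr_dev mg fin.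
have intg_m : (\int[P]_z (g z)%:E = m%:E)%E by rewrite fineK// integrable_fin_num.
have intsq := integrable_sqr_dev mg fin.
have intdev : P.-integrable setT (fun y => (m - g y)%:E).
  exact: (integrableB _ (integrable_cst m) intg).
have int_dev0 : (\int[P]_y (m - g y)%:E = 0)%E.
  rewrite (integralB_EFin measurableT (integrable_cst m) intg) /=.
  by rewrite integral_cst// P1 mule1 intg_m subee.
(* (a - g)^2 = (m - g)^2 + h, and h integrates to (a - m)^2 since m is the
   mean of g. *)
pose h y := 2 * (a - m) * (m - g y) + (a - m) ^+ 2.
have inth : P.-integrable setT (EFin \o h).
  exact: (integrableD _ (integrableZl _ (2 * (a - m)) intdev)
    (integrable_cst ((a - m) ^+ 2))).
have int_h : (\int[P]_y (h y)%:E = ((a - m) ^+ 2)%:E)%E.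
  rewrite (eq_integral (fun y => (2 * (a - m))%:E * (m - g y)%:E +
    ((a - m) ^+ 2)%:E)%E); last by move=> y _; rewrite -EFinM -EFinD.
  rewrite integralD//; last exact: integrableZl.
  by rewrite integralZl// int_dev0 mule0 add0e integral_cst1.
rewrite (eq_integral (fun y => ((a - g y) ^+ 2)%:E - (h y)%:E)%E); last first.
  by move=> y _; rewrite -EFinB /h; congr EFin; ring.
rewrite (integralB_EFin measurableT intsq inth) int_h leeBlDr//.
by rewrite leeDl// lee_fin sqr_ge0.
Qed.

End mean_square_deviation.

Section barycentric_projection.
Context (R : realType) (d : nat).
Local Notation Rd := (d.-tuple R).
Local Notation Rd2 := (Rd * Rd)%type.
Local Open Scope ereal_scope.

Lemma sqdist_ge0 (x y : Rd) : (0 <= sqdist x y)%R.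
Proof. by rewrite /sqdist sumr_ge0// => i _; exact: sqr_ge0. Qed.

Lemma measurable_sqdist dT (T : measurableType dT) (f g : T -> Rd) :
  measurable_fun setT f -> measurable_fun setT g ->
  measurable_fun setT (fun z => (sqdist (f z) (g z))%:E).
Proof.
move=> mf mg; apply/measurable_EFinP; apply: measurable_sum => i.
apply: measurable_funX; apply: measurable_funB.
  exact: measurableT_comp (measurable_tnth i) mf.
exact: measurableT_comp (measurable_tnth i) mg.
Qed.

Lemma measurable_EFin_tnth (i : 'I_d) :
  measurable_fun setT (fun y : Rd => (tnth y i)%:E).
Proof. by apply/measurable_EFinP; exact: measurable_tnth. Qed.

Lemma P2_integrable_tnth (nu : probability Rd R) (i : 'I_d) :
  P2 nu -> nu.-integrable setT (fun y => (tnth y i)%:E).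
Proof.
move=> P2nu; have mi := measurable_EFin_tnth i.
have msq : measurable_fun setT (fun y : Rd => (sqnorm y)%:E).
  apply/measurable_EFinP; apply: measurable_sum => j.
  exact: measurable_funX (measurable_tnth j).
apply/integrableP; split => //.
apply: (@le_lt_trans _ _ (\int[nu]_y (1 + (sqnorm y)%:E))).
  apply: ge0_le_integral => //.
  - exact: measurableT_comp (@abse_measurable R setT) mi.
  - exact: emeasurable_funD.
  move=> y _ /=; rewrite -EFinD lee_fin.
  have le_sqnorm : (tnth y i ^+ 2 <= sqnorm y)%R.
    by rewrite /sqnorm (bigD1 i)//= lerDl sumr_ge0// => j _; exact: sqr_ge0.
  by have := ler_norm_1Dsqr (tnth y i); lra.
rewrite ge0_integralD//; last first.
  by move=> y _; rewrite lee_fin sumr_ge0// => j _; exact: sqr_ge0.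
rewrite integral_cst// [X in 1 * X](probability_setT nu) mule1.
by apply: lte_add_pinfty => //; exact: ltry.
Qed.

Lemma coupling_integrable_tnth_snd (m nu : probability Rd R)
    (p : probability Rd2 R) (i : 'I_d) :
  P2 nu -> is_coupling m nu p ->
  p.-integrable setT (fun z => (tnth z.2 i)%:E).
Proof.
move=> P2nu pc; have nu_i := P2_integrable_tnth i P2nu.
by apply: (integrable_marginal measurable_snd) _ nu_i => A mA; exact: (pc A mA).2.
Qed.

Variable k : R.-pker Rd ~> Rd.

Lemma measurable_kernel_integral_tnth (i : 'I_d) :
  measurable_fun setT (fun x => \int[k x]_y (tnth y i)%:E).
Proof.
have mki (f : Rd -> \bar R) : (forall y, 0 <= f y) -> measurable_fun setT f ->
    measurable_fun setT (fun x => \int[k x]_y f y).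
  by apply: measurable_fun_integral_kernel => U mU; exact: measurable_kernel.
have mi := measurable_EFin_tnth i.
under eq_fun do rewrite integralE.
by apply: emeasurable_funB; apply: mki;
  [exact: funepos_ge0|exact: measurable_funepos
  |exact: funeneg_ge0|exact: measurable_funeneg].
Qed.

Lemma measurable_bary : measurable_fun setT (bary k).
Proof.
apply/measurable_fun_tnthP => i.
rewrite (_ : _ \o _ = fun x => fine (\int[k x]_y (tnth y i)%:E)); last first.
  by apply/funext => x; rewrite /= /bary tnth_mktuple.
exact: measurableT_comp (fine_measurable _) (measurable_kernel_integral_tnth i).
Qed.

Lemma measurable_bary_preimage (A : set Rd) :
  measurable A -> measurable (bary k @^-1` A).
Proof.
by move=> mA; rewrite -[X in measurable X]setTI; exact: measurable_bary.
Qed.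

Lemma integral_sqdist_bary_le (x a : Rd) :
  \int[k x]_y (sqdist (bary k x) y)%:E <= \int[k x]_y (sqdist a y)%:E.
Proof.
have mcoord (b : R) (i : 'I_d) :
    measurable_fun setT (fun y : Rd => ((b - tnth y i) ^+ 2)%:E).
  apply/measurable_EFinP; apply: measurable_funX.
  exact: measurable_funB (measurable_tnth i).
have coord_ge0 (b : R) (i : 'I_d) (y : Rd) : 0 <= ((b - tnth y i) ^+ 2)%:E.
  by rewrite lee_fin sqr_ge0.
rewrite /sqdist; under eq_integral do rewrite -sumEFin.
under [X in _ <= X]eq_integral do rewrite -sumEFin.
rewrite !ge0_integral_sum//; apply: lee_sum => i _.
rewrite /bary tnth_mktuple /Rintegral.
exact: (integral_sqr_dev_mean_le (@prob_kernel _ _ _ _ _ k x) (tnth a i)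
  (measurable_tnth i)).
Qed.

Definition bary_map (z : Rd2) : Rd2 := (bary k z.1, z.2).

Lemma measurable_bary_map : measurable_fun setT bary_map.
Proof.
exact: measurable_fun_pair (measurableT_comp measurable_bary measurable_fst) _.
Qed.

Definition bary_mfun : {mfun Rd2 >-> Rd2} :=
  HB.pack bary_map (isMeasurableFun.Build _ _ _ _ bary_map measurable_bary_map).

Definition bary_proj (pi : probability Rd2 R) :
  probability Rd2 R := distribution pi bary_mfun.

Variables (mu mu' nu : probability Rd R) (pi : probability Rd2 R).
Hypotheses (pi_coupling : is_coupling mu nu pi)
  (pi_disint : disintegrates mu pi k).
Hypothesis mu'_def :
  forall A, measurable A -> mu' A = pushforward mu (bary k) A.

Lemma integral_bary_proj (D : set Rd2) (f : Rd2 -> \bar R) :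
  measurable D -> measurable_fun setT f ->
  \int[bary_proj pi]_(z in D) f z =
  \int[pi]_(z in bary_map @^-1` D) f (bary_map z).
Proof. exact: integral_pushforwardE measurable_bary_map. Qed.

Lemma bary_proj_coupling : is_coupling mu' nu (bary_proj pi).
Proof.
move=> A mA; split; last exact: (pi_coupling mA).2.
rewrite mu'_def//.
exact: (pi_coupling (measurable_bary_preimage mA)).1.
Qed.

Lemma cost_bary_proj_le : cost (bary_proj pi) <= cost pi.
Proof.
have msq := measurable_sqdist (@measurable_fst _ _ Rd Rd) measurable_snd.
have mbsq := measurable_sqdist
  (measurableT_comp measurable_bary measurable_fst) (@measurable_snd _ _ Rd Rd).
have sq_ge0 (f g : Rd2 -> Rd) z : 0 <= (sqdist (f z) (g z))%:E.
  by rewrite lee_fin sqdist_ge0.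
rewrite /cost integral_bary_proj// preimage_setT.
rewrite !(ge0_integral_disintegration pi_disint)//.
apply: ge0_le_integral => //.
- by move=> x _; apply: integral_ge0 => y _; exact: sq_ge0.
- exact: (measurable_kfcomp k mbsq (sq_ge0 _ _)).
- exact: (measurable_kfcomp k msq (sq_ge0 _ _)).
by move=> x _; exact: integral_sqdist_bary_le.
Qed.

Lemma bary_proj_martingale :
  P2 nu -> is_martingale_coupling mu' nu (bary_proj pi).
Proof.
move=> P2nu; split; first exact: bary_proj_coupling.
move=> i; have int_i := coupling_integrable_tnth_snd i P2nu pi_coupling.
split; first exact: coupling_integrable_tnth_snd i P2nu bary_proj_coupling.
move=> A mA; have mB := measurable_bary_preimage mA.
have mi := measurable_EFin_tnth i.
have mci : measurable_fun setT (fun x => (tnth (bary k x) i)%:E).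
  exact: measurableT_comp mi measurable_bary.
rewrite !integral_bary_proj//; first last.
- exact: (measurableT_comp mi measurable_snd).
- exact: measurableX.
- exact: (measurableT_comp mi measurable_fst).
- exact: measurableX.
change (\int[pi]_(z in bary k @^-1` A `*` setT) (tnth z.2 i)%:E =
  \int[pi]_(z in bary k @^-1` A `*` setT) (tnth (bary k z.1) i)%:E).
rewrite (integral_disintegration_setX pi_disint mB int_i) setXT.
rewrite (integral_marginal measurable_fst mB mci
  (fun B mB => (pi_coupling mB).1)).
apply: ae_eq_integral => //.
- exact: measurable_funTS (measurable_kernel_integral_tnth i).
- exact: measurable_funTS mci.
rewrite /ae_eq.
apply: filterS (ae_integrable_disintegration pi_disint int_i) => x int_x _.
by rewrite /bary tnth_mktuple /Rintegral fineK// integrable_fin_num.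
Qed.

End barycentric_projection.

Theorem mainTheorem1 (R : realType) (d : nat)
  (nu : probability (d.-tuple R) R) (D : set (probability (d.-tuple R) R)) :
  P2 nu -> D `<=` @P2 R d ->
  forall (mu : probability (d.-tuple R) R)
         (pi : probability (d.-tuple R * d.-tuple R)%type R)
         (k : R.-pker (d.-tuple R) ~> (d.-tuple R)),
  D mu -> (forall m : probability (d.-tuple R) R, D m -> (W2sq mu nu <= W2sq m nu)%E) ->
  is_coupling mu nu pi -> cost pi = W2sq mu nu ->
  disintegrates mu pi k ->
  forall mu' : probability (d.-tuple R) R,
  (forall A, measurable A -> mu' A = pushforward mu (bary k) A) ->
  D mu' ->
  [/\ (forall m : probability (d.-tuple R) R, D m -> (W2sq mu' nu <= W2sq m nu)%E),
      (exists pi' : probability (d.-tuple R * d.-tuple R)%type R,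
         (forall A, measurable A ->
            pi' A = pushforward pi (fun z => (bary k z.1, z.2)) A) /\
         is_martingale_coupling mu' nu pi' /\
         (forall (m : probability (d.-tuple R) R) p, D m -> is_martingale_coupling m nu p ->
            (cost pi' <= cost p)%E))
    & value_R D nu = value_S D nu].
Proof.
move=> P2nu _ mu pi k Dmu mu_min pi_coupling pi_cost pi_disint mu' mu'_def Dmu'.
pose pi' := bary_proj k pi.
have pi'_mart := bary_proj_martingale pi_coupling pi_disint mu'_def P2nu.
have pi'_cost : (cost pi' <= W2sq mu nu)%E.
  by rewrite -pi_cost; exact: cost_bary_proj_le pi_disint.
have W2sq_le_cost m p : is_coupling m nu p -> (W2sq m nu <= cost p)%E.
  by move=> mp; apply: ereal_inf_lbound; exists p.
have mart_cost m p :
    D m -> is_martingale_coupling m nu p -> (W2sq mu nu <= cost p)%E.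
  by move=> Dm [mp _]; exact: le_trans (mu_min m Dm) (W2sq_le_cost m p mp).
have value_R_eq : value_R D nu = W2sq mu nu.
  apply/le_anti/andP; split; first by apply: ereal_inf_lbound; exists mu.
  by apply/ereal_infP => _ [m Dm <-]; exact: mu_min.
have value_S_eq : value_S D nu = W2sq mu nu.
  apply/le_anti/andP; split.
    apply: le_trans pi'_cost; apply: ereal_inf_lbound.
    by exists pi' => //; exists mu'.
  by apply/ereal_infP => _ [p [m [Dm mp]] <-]; exact: mart_cost mp.
split; last by rewrite value_R_eq value_S_eq.
  move=> m Dm; apply: le_trans (W2sq_le_cost _ _ pi'_mart.1) _.
  exact: le_trans pi'_cost (mu_min m Dm).
exists pi'; split=> //; split=> // m p Dm mp.
exact: le_trans pi'_cost (mart_cost m p Dm mp).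
Qed.
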